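(* Failure links and pops can be computed as follows. If $v\in\{r,r_\sharp\}$, then $f(v)=\mathrm{null}$ and $F(v)=[\,]$. Otherwise, let $u$ be the parent of $v$ and $c$ the edge label with $\delta(u,c)=v$; then $$(f(v),F(v)) = \begin{cases}(r_\sharp,\,[\chi_v]) & \text{if } \chi_v\in V,\\ \big(h(f(u),c),\; F(u)+H(f(u),c)\big) & \text{otherwise.}\end{cases}$$
   Context: Setting: WordPiece tokenization with vocabulary $V$, suffix indicator string $\sharp$ (e.g. ''##'', possibly empty). A trie is built from $V$ with root $r$ and node $r_\sharp$ representing $\sharp$; it may be augmented with nodes for $\sqcup$ and $\sharp\sqcup$, where $\sqcup$ is a whitespace character not in the vocabulary alphabet (not added to $V$). $\delta(u,c)$ is the child of $u$ along edge $c$, or null. $\chi_v$ is the string of node $v$; $\gamma_w$ is the node representing $w$, or null. Length of $w$: $|w|$ if $w$ does not start with $\sharp$, else $|w|-|\sharp|$. $p_w$: longest (by this length) non-empty prefix $w'\in V$, $w'\notin\{\varepsilon,\sharp\}$, of $w$, required to start with $\sharp$ if $w$ does; $p_w=\varepsilon$ if none, and $p_\sharp=\varepsilon$. $q_w:=\sharp w''$ where $w=p_w w''$. MinPop Matching: $(g(w),G(w)) := (\gamma_w,[\,])$ if $\gamma_w\neq\mathrm{null}$; else $(\mathrm{null},[\,])$ if $p_w=\varepsilon$; else $(g(q_w),[p_w]+G(q_w))$. One-step: $(h(u,c),H(u,c)) := (\mathrm{null},[\,])$ if $u=\mathrm{null}$, else $(g(\chi_u c),G(\chi_u c))$. Failure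 link and failure pops of node $v$, with $w=\chi_v$: $(f(v),F(v)) := (\mathrm{null},[\,])$ if $p_w=\varepsilon$, else $(g(q_w),\,[p_w]+G(q_w))$. *)

From mathcomp Require Import all_boot.
Set Implicit Arguments. Unset Strict Implicit. Unset Printing Implicit Defensive.

(* A trie node is
   identified with the string it represents (so chi_v = v); null is [None].
   Parameters:  V : vocabulary (finite list of strings),
                sh : suffix indicator string (possibly empty),
                aug : [None] (plain trie) or [Some sp] (trie augmented with the
                      nodes [sp] and sh ++ [sp], sp the whitespace char). *)

Section WordPiece.
Variable A : eqType.
Variables (V : seq (seq A)) (sh : seq A) (aug : option A).

Definition is_node (w : seq A) : bool :=
  has (prefix w) (sh :: V) ||
  (if aug is Some sp then (w == [:: sp]) || (w == sh ++ [:: sp]) else false).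

Definition gamma (w : seq A) : option (seq A) :=
  if is_node w then Some w else None.

Definition delta (u : seq A) (c : A) : option (seq A) :=
  if is_node (rcons u c) then Some (rcons u c) else None.

Definition starts_sh (w : seq A) : bool := prefix sh w.

Definition wlen (w : seq A) : nat :=
  if starts_sh w then size w - size sh else size w.

Definition cand (w w' : seq A) : bool :=
  [&& prefix w' w, w' \in V, w' != [::], w' != sh & starts_sh w ==> starts_sh w'].

(* p_w : the longest admissible prefix (length is monotone along prefixes
   among admissible candidates), or the empty string if none. *)
Definition pw (w : seq A) : seq A :=
  nth [::] [seq x <- [seq take k w | k <- rev (iota 1 (size w))] | cand w x] 0.

Definition qw (w : seq A) : seq A := sh ++ drop (size (pw w)) w.

(* MinPop matching (g(w), G(w)), by fuel; the fuel (size w).+1 always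
   suffices since wlen strictly decreases along recursive calls. *)
Fixpoint minpop_fuel (n : nat) (w : seq A) : option (seq A) * seq (seq A) :=
  match n with
  | 0 => (None, [::])
  | n'.+1 =>
    if gamma w is Some x then (Some x, [::])
    else if pw w == [::] then (None, [::])
    else let r := minpop_fuel n' (qw w) in (r.1, pw w :: r.2)
  end.

Definition minpop (w : seq A) := minpop_fuel (size w).+1 w.
Definition g (w : seq A) : option (seq A) := (minpop w).1.
Definition G (w : seq A) : seq (seq A) := (minpop w).2.

Definition h (u : option (seq A)) (c : A) : option (seq A) :=
  if u is Some x then g (rcons x c) else None.
Definition H (u : option (seq A)) (c : A) : seq (seq A) :=
  if u is Some x then G (rcons x c) else [::].

Definition f (v : seq A) : option (seq A) :=
  if pw v == [::] then None else g (qw v).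
Definition F (v : seq A) : seq (seq A) :=
  if pw v == [::] then [::] else pw v :: G (qw v).

End WordPiece.

From Pilot Require Import Defs.
From mathcomp Require Import all_boot zify.

Set Implicit Arguments.
Unset Strict Implicit.
Unset Printing Implicit Defensive.

(* MinPop matching commutes with appending a character:
   g(wc) = h(g(w), c) and G(wc) = G(w) ++ H(g(w), c).  If w is a trie node this
   is the definition of h and H.  Otherwise wc is not a node either, so it is
   neither in V nor equal to the suffix indicator; hence p_wc = p_w and
   q_wc = q_w c, and the claim follows by induction on the length of w, which
   drops strictly when passing to q_w.  Applying this to q_u gives the failure
   recursion for v = uc outside V; for v in V we get p_v = v, q_v = sh and
   g(sh) = r_sh. *)

Section Prefix.
Variable T : eqType.
Implicit Types s t w : seq T.

Lemma prefix_rconsE s w c : prefix s (rcons w c) = prefix s w || (s == rcons w c).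
Proof.
apply/idP/idP; last first.
  by case/orP=> [/prefix_trans->//|/eqP->]; rewrite ?prefix_rcons ?prefix_refl.
rewrite prefixE => /eqP def_s; case: (leqP (size s) (size w)) => [le_sw|lt_ws].
  by move: def_s; rewrite -cats1 takel_cat // => def_s; rewrite prefixE def_s eqxx.
by rewrite -def_s take_oversize ?size_rcons // eqxx orbT.
Qed.

Lemma prefix_anti s t : prefix s t -> prefix t s -> s = t.
Proof.
case/prefixP=> u -> /size_prefix; rewrite size_cat -[X in _ <= X]addn0 leq_add2l.
by rewrite leqn0 size_eq0 => /eqP->; rewrite cats0.
Qed.

Lemma size_prefix_lt s t : prefix s t -> s != t -> size s < size t.
Proof.
move=> pre_st ne_st; rewrite ltn_neqAle size_prefix // andbT.
apply: contra ne_st => /eqP eq_size.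
by move: pre_st; rewrite prefixE eq_size take_size eq_sym.
Qed.

Lemma map_take_rev_iota_rcons w c :
  [seq take k (rcons w c) | k <- rev (iota 1 (size (rcons w c)))] =
  rcons w c :: [seq take k w | k <- rev (iota 1 (size w))].
Proof.
rewrite size_rcons -[(size w).+1]addn1 iotaD rev_cat /= add1n take_oversize ?size_rcons //.
congr (_ :: _); apply/eq_in_map => k; rewrite mem_rev mem_iota => /andP[_ lt_k].
by rewrite -cats1 takel_cat // -ltnS -add1n.
Qed.

End Prefix.

Section WordPieceTrie.
Variable A : eqType.
Variables (V : seq (seq A)) (sh : seq A) (aug : option A).
Implicit Types (u w : seq A) (c : A).

(* These notations shadow the constants of Defs, so unfolding uses qualified names. *)
Local Notation is_node := (is_node V sh aug).
Local Notation gamma := (gamma V sh aug).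
Local Notation starts_sh := (starts_sh sh).
Local Notation wlen := (wlen sh).
Local Notation cand := (cand V sh).
Local Notation pw := (pw V sh).
Local Notation qw := (qw V sh).
Local Notation minpop_fuel := (minpop_fuel V sh aug).
Local Notation minpop := (minpop V sh aug).
Local Notation g := (g V sh aug).
Local Notation G := (G V sh aug).
Local Notation h := (h V sh aug).
Local Notation H := (H V sh aug).
Local Notation f := (f V sh aug).
Local Notation F := (F V sh aug).

Lemma is_node_rcons w c : is_node (rcons w c) -> is_node w.
Proof.
case/orP=> [/hasP[x x_word /(prefix_trans (prefix_rcons w c)) w_pre]|].
  by apply/orP; left; apply/hasP; exists x.
case: aug => // sp /orP[/eqP|/eqP].
  by rewrite -[[:: sp]]/(rcons [::] sp) => /rcons_inj[-> _]; rewrite /Defs.is_node /= prefix0s.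
by rewrite cats1 => /rcons_inj[-> _]; rewrite /Defs.is_node /= prefix_refl.
Qed.

Lemma mem_is_node w : w \in V -> is_node w.
Proof.
by move=> w_word; apply/orP; left; apply/hasP; exists w; rewrite ?inE ?w_word ?orbT ?prefix_refl.
Qed.

Lemma is_node_sh : is_node sh.
Proof. by rewrite /Defs.is_node /= prefix_refl. Qed.

Lemma starts_sh_rcons w c : rcons w c != sh -> starts_sh (rcons w c) = starts_sh w.
Proof.
move=> ne_sh; rewrite /Defs.starts_sh prefix_rconsE.
by case: (sh =P rcons w c) ne_sh => [->|_]; rewrite ?eqxx ?orbF.
Qed.

Lemma pw_cand w : pw w != [::] -> cand w (pw w).
Proof.
rewrite /Defs.pw; set s := filter _ _ => ne_nil.
have s_gt0 : 0 < size s by move: ne_nil; case: s.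
by have := mem_nth [::] s_gt0; rewrite mem_filter => /andP[].
Qed.

Lemma prefix_pw w : prefix (pw w) w.
Proof. by case: (pw w =P [::]) => [->|/eqP/pw_cand/and5P[]//]; rewrite prefix0s. Qed.

Lemma pw_id w : w \in V -> w != [::] -> w != sh -> pw w = w.
Proof.
case/lastP: w => [//|u c] w_word ne_nil ne_sh.
rewrite /Defs.pw map_take_rev_iota_rcons /= /Defs.cand.
by rewrite prefix_refl w_word ne_nil ne_sh implybb.
Qed.

Lemma pw_rcons w c : rcons w c \notin V -> rcons w c != sh -> pw (rcons w c) = pw w.
Proof.
move=> notin_V ne_sh.
rewrite /Defs.pw map_take_rev_iota_rcons /= {1}/Defs.cand (negbTE notin_V) andbF.
congr nth; apply: eq_in_filter => _ /mapP[k _ ->].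
by rewrite /Defs.cand starts_sh_rcons // prefix_rconsE !prefix_take.
Qed.

Lemma pw_sh : pw sh = [::].
Proof.
case: (pw sh =P [::]) => // /eqP/pw_cand/and5P[pre_sh _ _ ne_sh].
rewrite /Defs.starts_sh prefix_refl /= => /(prefix_anti pre_sh) eq_sh.
by rewrite eq_sh eqxx in ne_sh.
Qed.

Lemma qw_rcons w c : pw (rcons w c) = pw w -> qw (rcons w c) = rcons (qw w) c.
Proof. by rewrite /Defs.qw => ->; rewrite drop_rcons ?rcons_cat // size_prefix ?prefix_pw. Qed.

Lemma wlen_qw w : pw w != [::] -> wlen (qw w) < wlen w.
Proof.
move=> ne_nil; have /and5P[pre_w _ _ ne_sh sh_pre] := pw_cand ne_nil.
have le_pw := size_prefix pre_w.
have pw_gt0 : 0 < size (pw w) by rewrite lt0n size_eq0.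
move: sh_pre; rewrite /Defs.wlen /Defs.qw /Defs.starts_sh prefix_prefix.
rewrite size_cat size_drop addKn; case: ifP => /= _; last lia.
by move/size_prefix_lt; rewrite eq_sym => /(_ ne_sh); lia.
Qed.

Lemma wlen_le_size w : wlen w <= size w.
Proof. by rewrite /Defs.wlen; case: ifP => // _; rewrite leq_subr. Qed.

Lemma eq_minpop_fuel n m w : wlen w < n -> wlen w < m -> minpop_fuel n w = minpop_fuel m w.
Proof.
elim: n m w => [|n IH] [|m] w //= lt_wn lt_wm.
case: (gamma w) => //; case: eqP => // /eqP/wlen_qw lt_qw.
by rewrite (IH m) //; apply: leq_trans lt_qw _.
Qed.

Lemma minpopE w : minpop w =
  if gamma w is Some x then (Some x, [::])
  else if pw w == [::] then (None, [::])
  else ((minpop (qw w)).1, pw w :: (minpop (qw w)).2).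
Proof.
rewrite {1}/Defs.minpop /=; case: (gamma w) => //; case: eqP => // /eqP/wlen_qw lt_qw.
rewrite /Defs.minpop (@eq_minpop_fuel (size w) (size (qw w)).+1) ?ltnS ?wlen_le_size //.
exact: leq_trans lt_qw (wlen_le_size w).
Qed.

Lemma minpop_rcons w c : minpop (rcons w c) = (h (g w) c, G w ++ H (g w) c).
Proof.
move: {2}(wlen w).+1 (ltnSn (wlen w)) => n.
elim: n w => [w|n IH w lt_wn]; first by rewrite ltn0.
have [w_node|w_not_node] := boolP (is_node w).
  rewrite /Defs.g /Defs.G (minpopE w) /Defs.gamma w_node /Defs.h /Defs.H cat0s.
  exact: surjective_pairing.
have wc_not_node : ~~ is_node (rcons w c) by apply: contra w_not_node; apply: is_node_rcons.
have notin_V : rcons w c \notin V by apply: contra wc_not_node; apply: mem_is_node.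
have ne_sh : rcons w c != sh.
  by apply: contra wc_not_node => /eqP->; apply: is_node_sh.
have pw_wc := pw_rcons notin_V ne_sh.
rewrite /Defs.g /Defs.G (minpopE w) (minpopE (rcons w c)) /Defs.gamma.
rewrite (negbTE w_not_node) (negbTE wc_not_node) pw_wc.
case: eqP => // /eqP/wlen_qw lt_qw.
by rewrite (qw_rcons pw_wc) IH //; apply: leq_trans lt_qw _.
Qed.

Lemma failure_vocab v : v \in V -> v != [::] -> v != sh -> (f v, F v) = (gamma sh, [:: v]).
Proof.
move=> v_word ne_nil ne_sh.
rewrite /Defs.f /Defs.F /Defs.qw pw_id // (negbTE ne_nil) drop_size cats0.
by rewrite /Defs.g /Defs.G minpopE /Defs.gamma is_node_sh.
Qed.

Lemma failure_rcons u c : rcons u c \notin V -> rcons u c != sh ->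
  (f (rcons u c), F (rcons u c)) = (h (f u) c, F u ++ H (f u) c).
Proof.
move=> notin_V ne_sh; have pw_uc := pw_rcons notin_V ne_sh.
rewrite /Defs.f /Defs.F pw_uc; case: eqP => // _.
by rewrite (qw_rcons pw_uc) /Defs.g /Defs.G minpop_rcons.
Qed.

End WordPieceTrie.

Theorem lemma5 (A : eqType) (V : seq (seq A)) (sh : seq A) (aug : option A) :
  (* the whitespace character is not in the vocabulary alphabet *)
  (forall sp, aug = Some sp -> sp \notin sh /\ forall w, w \in V -> sp \notin w) ->
  (* nodes r and r_sharp *)
  (forall v, v = [::] \/ v = sh ->
     f V sh aug v = None /\ F V sh aug v = [::]) /\
  (* other nodes v = delta(u, c) *)
  (forall (u v : seq A) (c : A),
     is_node V sh aug u -> delta V sh aug u c = Some v -> v != [::] -> v != sh ->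
     (f V sh aug v, F V sh aug v) =
       if v \in V then (gamma V sh aug sh, [:: v])
       else (h V sh aug (f V sh aug u) c,
             F V sh aug u ++ H V sh aug (f V sh aug u) c)).
Proof.
move=> _; split.
  by move=> v [|] ->; rewrite /f /F ?pw_sh.
move=> u v c _; rewrite /delta; case: ifP => // _ [<-] ne_nil ne_sh.
case: ifP => [v_word|/negbT notin_V]; first exact: failure_vocab.
exact: failure_rcons.
Qed.
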